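(* In the cloud-side decompression procedure described in the context, the computational cost of the transformations the cloud applies to recover a stored string $F'$ of length $n_b$ is $O(N_B + n_b\cdot N)$, where $N_B$ is the number of stored bases and $N$ is the alphabet size.
   Context: The cloud stores, for each received string $F'$ of length $n_b$ over the alphabet $\Sigma=\{0,1\}^k$ of size $N$, a record consisting of a file identifier, a pointer to a base $B$ (a sorted string of bracket IDs) kept in a set of $N_B$ bases, a string describing swaps (a bitmap of marked positions together with an array of partner positions) that transform the unsorted bracket-ID string into $B$, a string of symbol IDs, and a string of zone value IDs. Symbols are arranged in a fixed ''brackets table'' of four zones, where each symbol is identified by its bracket ID (column), symbol ID (row code) and the value ID of its zone. Decompression of a requested identifier proceeds as follows: (1) locate the record and retrieve its base $B$ by searching over the stored bases using the identifier; (2) read the swap information and perform the recorded swaps in reverse to recover the unsorted bracket-ID string; (3) for each position, recover the symbol from its triple (bracket ID, symbol ID, value ID) by scanning the brackets table; this yields $F'$, which is returned. *)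

From mathcomp Require Import all_boot.
Set Implicit Arguments. Unset Strict Implicit. Unset Printing Implicit Defensive.

Definition symb (k : nat) := k.-tuple bool.

(* Brackets table: one entry per symbol, with its triple
   (bracket ID, symbol ID, zone value ID). *)
Definition brackets_table (k : nat) := seq (symb k * (nat * nat * nat)).

(* Stored bases: each base (a sorted string of bracket IDs) with the key
   (pointer / identifier) used to search it. *)
Definition base_store := seq (nat * seq nat).

Record cloud_record := CloudRecord {
  rec_id       : nat;
  rec_base     : nat;
  rec_bitmap   : seq bool;   (* marked positions of swaps *)
  rec_partners : seq nat;    (* partner positions of marked positions *)
  rec_symids   : seq nat;
  rec_valids   : seq nat     (* zone value IDs *)
}.

(* All functions return (result, cost); cost = number of elementary
   operations (comparisons / array accesses / swaps), each of unit cost. *)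

Fixpoint find_base (key : nat) (bs : base_store) : option (seq nat) * nat :=
  match bs with
  | [::] => (None, 0)
  | (i, b) :: bs' =>
      if i == key then (Some b, 1)
      else let: (r, c) := find_base key bs' in (r, c.+1)
  end.

Fixpoint collect_swaps (bm : seq bool) (pt : seq nat) (i : nat)
  : seq (nat * nat) * nat :=
  match bm with
  | [::] => ([::], 0)
  | b :: bm' =>
      if b then
        match pt with
        | p :: pt' => let: (s, c) := collect_swaps bm' pt' i.+1 in ((i, p) :: s, c.+1)
        | [::] => let: (s, c) := collect_swaps bm' [::] i.+1 in (s, c.+1)
        end
      else let: (s, c) := collect_swaps bm' pt i.+1 in (s, c.+1)
  end.

Definition swap_pos (s : seq nat) (i j : nat) : seq nat :=
  set_nth 0 (set_nth 0 s i (nth 0 s j)) j (nth 0 s i).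

(* (2b) perform the recorded swaps in reverse order (last one first);
   each swap costs one unit. *)
Definition undo_swaps (B : seq nat) (sw : seq (nat * nat)) : seq nat * nat :=
  (foldr (fun ij acc => swap_pos acc ij.1 ij.2) B sw, size sw).

Fixpoint lookup_symb k (tbl : brackets_table k) (t : nat * nat * nat)
  : option (symb k) * nat :=
  match tbl with
  | [::] => (None, 0)
  | (x, t') :: tbl' =>
      if t' == t then (Some x, 1)
      else let: (r, c) := lookup_symb tbl' t in (r, c.+1)
  end.

Definition dflt_symb k : symb k := nseq_tuple k false.

Fixpoint recover k (tbl : brackets_table k) (U sids vids : seq nat)
  : seq (symb k) * nat :=
  match U, sids, vids with
  | b :: U', s :: sids', v :: vids' =>
      let: (x, c) := lookup_symb tbl (b, s, v) in
      let: (F, c') := recover tbl U' sids' vids' in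
      (odflt (dflt_symb k) x :: F, c + c')
  | _, _, _ => ([::], 0)
  end.

(* Whole decompression of a (located) record; locating the record itself
   is charged one unit. Returns the recovered F' (if the base is found)
   and the total cost. *)
Definition decompress k (tbl : brackets_table k) (bases : base_store)
  (r : cloud_record) : option (seq (symb k)) * nat :=
  let: (ob, c1) := find_base (rec_base r) bases in
  match ob with
  | None => (None, c1.+1)
  | Some B =>
      let: (sw, c2) := collect_swaps (rec_bitmap r) (rec_partners r) 0 in
      let: (U, c3) := undo_swaps B sw in
      let: (F, c4) := recover tbl U (rec_symids r) (rec_valids r) in
      (Some F, 1 + c1 + c2 + c3 + c4)
  end.

(* Each phase of the decompression is a single scan: the base search walks the
   [N_B] stored bases once, the bitmap scan and the swap replay are linear in
   [n_b], and each of the [n_b] symbols is recovered by one pass over the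
   [N = 2^k] entries of the brackets table.  The total is therefore at most
   [1 + N_B + 2 n_b + n_b N], and since the base being searched for is stored,
   [N_B >= 1] absorbs the constant. *)
From mathcomp Require Import all_boot.
From mathcomp Require Import zify.

Set Implicit Arguments.
Unset Strict Implicit.

Lemma find_base_cost key (bs : base_store) : (find_base key bs).2 <= size bs.
Proof.
elim: bs => [|[i b] bs IH] //=; case: ifP => _ //.
by case: (find_base key bs) IH.
Qed.

Lemma collect_swaps_cost bm pt i :
  (collect_swaps bm pt i).2 = size bm /\ size (collect_swaps bm pt i).1 <= size bm.
Proof.
elim: bm pt i => [|b bm IH] pt i //=.
case: b; [case: pt => [|p pt] |].
- by case: (collect_swaps bm [::] i.+1) (IH [::] i.+1) => s c /= [-> /leqW].
- by case: (collect_swaps bm pt i.+1) (IH pt i.+1) => s c /= [->].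
- by case: (collect_swaps bm pt i.+1) (IH pt i.+1) => s c /= [-> /leqW].
Qed.

Lemma lookup_symb_cost k (tbl : brackets_table k) t :
  (lookup_symb tbl t).2 <= size tbl.
Proof.
elim: tbl => [|[x t'] tbl IH] //=; case: ifP => _ //.
by case: (lookup_symb tbl t) IH.
Qed.

Lemma recover_cost k (tbl : brackets_table k) U sids vids :
  (recover tbl U sids vids).2 <= size sids * size tbl.
Proof.
elim: U sids vids => [|b U IH] [|s sids] [|v vids] //=.
move: (lookup_symb_cost tbl (b, s, v)) (IH sids vids).
case: (lookup_symb tbl _) => x c; case: (recover tbl U sids vids) => F c' /=.
by rewrite mulSn; apply: leq_add.
Qed.

Lemma decompress_cost k (tbl : brackets_table k) bases r :
  (decompress tbl bases r).2 <=
    1 + size bases + 2 * size (rec_bitmap r) + size (rec_symids r) * size tbl.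
Proof.
rewrite /decompress.
case: (find_base _ bases) (find_base_cost (rec_base r) bases) => [[B|] c1] /= Hc1;
  last by lia.
have := collect_swaps_cost (rec_bitmap r) (rec_partners r) 0.
case: (collect_swaps _ _ 0) => sw c2 /= [Hc2 Hsw].
case: (recover _ _ _ _) (recover_cost tbl (undo_swaps B sw).1 (rec_symids r) (rec_valids r))
  => F c4 /= Hc4.
lia.
Qed.

Theorem theorem4 :
  exists c : nat,
    forall (k : nat) (tbl : brackets_table k) (bases : base_store)
           (r : cloud_record) (n_b : nat) (B : seq nat),
      size tbl = 2 ^ k ->
      (rec_base r, B) \in bases ->
      size B = n_b ->
      size (rec_bitmap r) = n_b ->
      size (rec_symids r) = n_b ->
      size (rec_valids r) = n_b ->
      (decompress tbl bases r).2 <= c * (size bases + n_b * 2 ^ k).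
Proof.
exists 4 => k tbl bases r n_b B Htbl Hin _ Hbm Hsids _.
have bases_gt0 : 0 < size bases by case: bases Hin.
have table_gt0 : 0 < 2 ^ k by rewrite expn_gt0.
apply: leq_trans (decompress_cost tbl bases r) _.
rewrite Hbm Hsids Htbl.
nia.
Qed.
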